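(* Let $V$ be a vertex algebra, $I$ an ideal of $V$, and $M$ a subspace of $V$ with $I\subseteq M$. Then $M$ is an $MZ_{0,-1}$-subspace of $V$ if and only if $M/I$ is an $MZ_{0,-1}$-subspace of the quotient vertex algebra $V/I$.
   Context: Vertex algebras are over $\mathbb{C}$; for $u\in V$ write $Y(u,z)=\sum_{n\in\mathbb{Z}}u_nz^{-n-1}$ with $u_n\in\operatorname{End}V$. An ideal of $V$ is a subspace $I$ with $v_nw\in I$ and $w_nv\in I$ for all $v\in V$, $w\in I$, $n\in\mathbb{Z}$. Iterated products are nested to the right: $v_{n_1}\cdots v_{n_t}v=v_{n_1}(\cdots(v_{n_t}v))$. For a subspace $M\subseteq V$: $r_{0,-1}(M)$ is the set of $v\in V$ for which there is $m\ge 0$ with $v_{n_1}\cdots v_{n_t}v\in M$ for all $t\ge m$ and all $n_1,\dots,n_t\in\{0,-1\}$. $lsr_{0,-1}(M)$ is the set of $v\in V$ such that for every $b\in V$ there is $m\ge0$ with $b_sv_{n_1}\cdots v_{n_t}v\in M$ for all $t\ge m$ and all $s,n_1,\dots,n_t\in\{0,-1\}$. $rsr_{0,-1}(M)$ is the set of $v\in V$ such that for every $w\in V$ there is $m\ge 0$ with $(v_{n_1}\cdots v_{n_t}v)_nw\in M$ for all $t\ge m$ and all $n,n_1,\dots,n_t\in\{0,-1\}$. $sr_{0,-1}(M)=lsr_{0,-1}(M)\cap rsr_{0,-1}(M)$. $M$ is an $MZ_{0,-1}$-subspace of $V$ if $r_{0,-1}(M)=sr_{0,-1}(M)$. *)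

From HB Require Import structures.
From mathcomp Require Import all_boot all_order all_algebra.
From mathcomp Require Import complex.
From mathcomp Require Import Rstruct.
Set Implicit Arguments. Unset Strict Implicit. Unset Printing Implicit Defensive.
Import Order.TTheory GRing.Theory Num.Theory.
Local Open Scope ring_scope.

Definition Cx : fieldType := (Rdefinitions.R)[i].

Definition ibinom (p : int) (i : nat) : Cx :=
  (\prod_(j < i) (p%:~R - j%:R)) / (i`!)%:R.

(* A vertex algebra over C on the vector space V.
   vmul u n v is u_n v  (Y(u,z) = sum_n u_n z^{-n-1}). *)
Record vertex_algebra (V : lmodType Cx) := VertexAlgebra {
  vmul : V -> int -> V -> V;
  vac : V;
  vmul_linl : forall (a : Cx) u1 u2 n v,
      vmul (a *: u1 + u2) n v = a *: vmul u1 n v + vmul u2 n v;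
  vmul_linr : forall (a : Cx) u n v1 v2,
      vmul u n (a *: v1 + v2) = a *: vmul u n v1 + vmul u n v2;
  vmul_trunc : forall u v, exists N : int, forall n : int, N <= n -> vmul u n v = 0;
  vmul_vac : forall n v, vmul vac n v = if n == -1 then v else 0;
  (* creation property: Y(u,z)1 = u + z V[[z]] *)
  vmul_creat_1 : forall u, vmul u (-1) vac = u;
  vmul_creat_0 : forall u (n : int), 0 <= n -> vmul u n vac = 0;
  (* Jacobi identity, in its component (Borcherds) form: for all p q r,
       sum_{i>=0} binom(p,i) (u_{r+i} v)_{p+q-i} w
     = sum_{i>=0} (-1)^i binom(r,i) (u_{p+r-i} v_{q+i} w
                                    - (-1)^r v_{q+r-i} u_{p+i} w);
     both sums are finite, so they agree with all sufficiently long
     partial sums. *)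
  vmul_borcherds : forall u v w (p q r : int), exists N0 : nat,
    forall N : nat, (N0 <= N)%N ->
      \sum_(i < N) ibinom p i *: vmul (vmul u (r + i%:Z) v) (p + q - i%:Z) w
    = \sum_(i < N) ((-1) ^+ i * ibinom r i) *:
         (vmul u (p + r - i%:Z) (vmul v (q + i%:Z) w)
          - (-1) ^ r *: vmul v (q + r - i%:Z) (vmul u (p + i%:Z) w))
}.

Section VA.
Variables (V : lmodType Cx) (A : vertex_algebra V).

Definition is_subspace (M : V -> Prop) : Prop :=
  M 0 /\ forall (a : Cx) x y, M x -> M y -> M (a *: x + y).

Definition is_ideal (I : V -> Prop) : Prop :=
  is_subspace I /\
  forall v w (n : int), I w -> I (vmul A v n w) /\ I (vmul A w n v).

Definition iter_prod (v : V) (ns : seq int) (x : V) : V :=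
  foldr (fun n acc => vmul A v n acc) x ns.

Definition in01 (n : int) : bool := (n == 0) || (n == -1).

Definition r01 (M : V -> Prop) : V -> Prop := fun v =>
  exists m : nat, forall ns : seq int,
    (m <= size ns)%N -> all in01 ns -> M (iter_prod v ns v).

Definition lsr01 (M : V -> Prop) : V -> Prop := fun v =>
  forall b : V, exists m : nat, forall (s : int) (ns : seq int),
    (m <= size ns)%N -> in01 s -> all in01 ns ->
    M (vmul A b s (iter_prod v ns v)).

Definition rsr01 (M : V -> Prop) : V -> Prop := fun v =>
  forall w : V, exists m : nat, forall (n : int) (ns : seq int),
    (m <= size ns)%N -> in01 n -> all in01 ns ->
    M (vmul A (iter_prod v ns v) n w).

Definition sr01 (M : V -> Prop) : V -> Prop := fun v => lsr01 M v /\ rsr01 M v.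

Definition MZ01 (M : V -> Prop) : Prop := forall v, r01 M v <-> sr01 M v.

End VA.

Definition va_hom (V W : lmodType Cx) (A : vertex_algebra V) (B : vertex_algebra W)
  (f : V -> W) : Prop :=
  (forall (a : Cx) x y, f (a *: x + y) = a *: f x + f y) /\
  (forall u (n : int) v, f (vmul A u n v) = vmul B (f u) n (f v)) /\
  f (vac A) = vac B.

(* (W, B, f) is a quotient vertex algebra V/I with canonical projection f:
   f is a surjective vertex algebra homomorphism with kernel exactly I. *)
Definition is_quotient (V W : lmodType Cx) (A : vertex_algebra V) (B : vertex_algebra W)
  (I : V -> Prop) (f : V -> W) : Prop :=
  va_hom A B f /\ (forall w, exists v, f v = w) /\ (forall v, f v = 0 <-> I v).

(* image of a subset: M/I inside V/I when f is the projection *)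
Definition img_set (V W : Type) (f : V -> W) (M : V -> Prop) : W -> Prop :=
  fun w => exists v, M v /\ f v = w.

(* The projection f : V -> V/I is a surjective homomorphism, and since I <= M
   the subspace M is the full preimage of M/I.  All four conditions r, lsr,
   rsr and sr are transported along a surjective homomorphism to the preimage
   of a subset, because f commutes with the iterated products
   v_{n1} ... v_{nt} v; the universally quantified b and w of lsr and rsr are
   handled by lifting them through f. *)

From mathcomp Require Import all_boot all_order all_algebra.
Import GRing.Theory.
Local Open Scope ring_scope.

Lemma img_set_preimE (V W : lmodType Cx) (f : V -> W) (M : V -> Prop) :
  (forall (a : Cx) x y, f (a *: x + y) = a *: f x + f y) ->
  is_subspace M -> (forall v, f v = 0 -> M v) ->
  forall x, img_set f M (f x) <-> M x.
Proof.
move=> f_lin [_ M_lin] kerM x; split=> [[y [My fy_x]]|Mx]; last by exists x.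
have M_diff : M ((-1) *: y + x) by apply: kerM; rewrite f_lin fy_x scaleN1r addNr.
have := M_lin 1 _ _ M_diff My.
by rewrite scale1r scaleN1r addrAC addNr add0r.
Qed.

Section PreimageTransfer.
Variables (V W : lmodType Cx) (A : vertex_algebra V) (B : vertex_algebra W).
Variables (f : V -> W) (M : V -> Prop) (N : W -> Prop).
Hypothesis f_vmul : forall u n v, f (vmul A u n v) = vmul B (f u) n (f v).
Hypothesis M_preim : forall x, M x <-> N (f x).

Lemma iter_prod_morph v ns x : f (iter_prod A v ns x) = iter_prod B (f v) ns (f x).
Proof. by elim: ns => [|n ns IH] //=; rewrite f_vmul IH. Qed.

Lemma r01_preim v : r01 A M v <-> r01 B N (f v).
Proof.
split=> -[m r_m]; exists m => ns size_ns ns01.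
  by rewrite -iter_prod_morph -M_preim; apply: r_m.
by rewrite M_preim iter_prod_morph; apply: r_m.
Qed.

Hypothesis f_surj : forall w, exists v, f v = w.

Lemma lsr01_preim v : lsr01 A M v <-> lsr01 B N (f v).
Proof.
split=> lsr_v b.
  have [b' <-] := f_surj b; have [m lsr_m] := lsr_v b'; exists m => s ns ? ? ?.
  by rewrite -iter_prod_morph -f_vmul -M_preim; apply: lsr_m.
have [m lsr_m] := lsr_v (f b); exists m => s ns ? ? ?.
by rewrite M_preim f_vmul iter_prod_morph; apply: lsr_m.
Qed.

Lemma rsr01_preim v : rsr01 A M v <-> rsr01 B N (f v).
Proof.
split=> rsr_v w.
  have [w' <-] := f_surj w; have [m rsr_m] := rsr_v w'; exists m => n ns ? ? ?.
  by rewrite -iter_prod_morph -f_vmul -M_preim; apply: rsr_m.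
have [m rsr_m] := rsr_v (f w); exists m => n ns ? ? ?.
by rewrite M_preim f_vmul iter_prod_morph; apply: rsr_m.
Qed.

Lemma sr01_preim v : sr01 A M v <-> sr01 B N (f v).
Proof. by rewrite /sr01 lsr01_preim rsr01_preim. Qed.

Lemma MZ01_preim : MZ01 A M <-> MZ01 B N.
Proof.
split=> MZ_M v; last by rewrite r01_preim sr01_preim.
by have [v' <-] := f_surj v; rewrite -r01_preim -sr01_preim.
Qed.

End PreimageTransfer.

Theorem mainTheorem8 (V : lmodType Cx) (A : vertex_algebra V)
  (I M : V -> Prop) :
  is_ideal A I -> is_subspace M -> (forall v, I v -> M v) ->
  forall (W : lmodType Cx) (B : vertex_algebra W) (f : V -> W),
    is_quotient A B I f ->
    (MZ01 A M <-> MZ01 B (img_set f M)).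
Proof.
(* That I is an ideal is already implied by the existence of the quotient. *)
move=> _ M_sub IM W B f [[f_lin [f_vmul _]] [f_surj kerI]].
have kerM v : f v = 0 -> M v by move/kerI; apply: IM.
apply: MZ01_preim f_vmul _ f_surj => x.
by rewrite img_set_preimE.
Qed.
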